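(* Let $B^4\subset\mathbb{R}^4$ be an open neighbourhood of $0$ with coordinates $(x_1,y_1,x_2,y_2)$, let $k$ be a smooth nowhere vanishing function on $B^4$, and let $$\pi=k\Big((x_2^2+y_2^2)\,\partial_{x_1}\wedge\partial_{y_1}+(x_1^2+y_1^2)\,\partial_{x_2}\wedge\partial_{y_2}-(y_1y_2+x_1x_2)\,\partial_{x_1}\wedge\partial_{y_2}+(x_1x_2+y_1y_2)\,\partial_{y_1}\wedge\partial_{x_2}+(y_1x_2-x_1y_2)\,\partial_{y_1}\wedge\partial_{y_2}+(y_1x_2-x_1y_2)\,\partial_{x_1}\wedge\partial_{x_2}\Big),$$ the Poisson structure whose symplectic leaves are the (punctured) level sets of $F=(F_1,F_2)$, $F_1=x_1^2-y_1^2+x_2^2-y_2^2$, $F_2=2(x_1y_1+x_2y_2)$. Let $q=(x_1,y_1,x_2,y_2)\in B^4\setminus\{0\}$ and let $\Sigma_q$ be the symplectic leaf through $q$. Then $$\omega_{\Sigma_q}(q)=\frac{1}{k(x_1,y_1,x_2,y_2)\,(x_1^2+y_1^2+x_2^2+y_2^2)}\,\omega_{Area}(q),$$ where $\omega_{Area}$ is the area form on $\Sigma_q$ induced by the euclidean metric $dx_1^2+dy_1^2+dx_2^2+dy_2^2$ (for a suitable orientation of $\Sigma_q$ at $q$).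
   Context: For a Poisson bivector $\pi$, set $\mathcal{B}_q(\alpha)=\pi_q(\cdot,\alpha)$ for $\alpha\in T_q^*M$. The symplectic leaf $\Sigma_q$ through $q$ has $T_q\Sigma_q=\mathcal{B}_q(T_q^*M)$ and carries the symplectic form $\omega_{\Sigma_q}(q)(u,v)=\pi_q(\alpha,\beta)=\langle\alpha,v\rangle$ whenever $u=\mathcal{B}_q(\alpha)$, $v=\mathcal{B}_q(\beta)$. The given $\pi$ is the local form near a Lefschetz singularity $(z_1,z_2)\mapsto z_1^2+z_2^2$, $z_j=x_j+iy_j$. *)

(* concrete reals R. Points/vectors/covectors of R^4 are
   4-tuples in the coordinate order (x1, y1, x2, y2). *)
From Stdlib Require Import Reals.
Open Scope R_scope.

Definition V4 : Type := (R * R * R * R)%type.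

Definition mk4 (a b c d : R) : V4 := (a, b, c, d).
Definition c1 (v : V4) : R := let '(a, _, _, _) := v in a.
Definition c2 (v : V4) : R := let '(_, b, _, _) := v in b.
Definition c3 (v : V4) : R := let '(_, _, c, _) := v in c.
Definition c4 (v : V4) : R := let '(_, _, _, d) := v in d.

Definition dot (u v : V4) : R :=
  c1 u * c1 v + c2 u * c2 v + c3 u * c3 v + c4 u * c4 v.
Definition normsq (v : V4) : R := dot v v.

Definition vadd (u v : V4) : V4 :=
  mk4 (c1 u + c1 v) (c2 u + c2 v) (c3 u + c3 v) (c4 u + c4 v).
Definition vscale (a : R) (v : V4) : V4 :=
  mk4 (a * c1 v) (a * c2 v) (a * c3 v) (a * c4 v).

Definition open4 (B : V4 -> Prop) : Prop :=
  forall p, B p -> exists r, 0 < r /\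
    forall p', normsq (vadd p' (vscale (-1) p)) < r * r -> B p'.

(* (d_i /\ d_j)(alpha, beta) = alpha_i beta_j - alpha_j beta_i *)
Definition wedge (ai aj bi bj : R) : R := ai * bj - aj * bi.

Definition pi_biv (k : V4 -> R) (q alpha beta : V4) : R :=
  let x1 := c1 q in let y1 := c2 q in let x2 := c3 q in let y2 := c4 q in
  let a1 := c1 alpha in let a2 := c2 alpha in
  let a3 := c3 alpha in let a4 := c4 alpha in
  let b1 := c1 beta in let b2 := c2 beta in
  let b3 := c3 beta in let b4 := c4 beta in
  k q * ( (x2 ^ 2 + y2 ^ 2) * wedge a1 a2 b1 b2
        + (x1 ^ 2 + y1 ^ 2) * wedge a3 a4 b3 b4
        - (y1 * y2 + x1 * x2) * wedge a1 a4 b1 b4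
        + (x1 * x2 + y1 * y2) * wedge a2 a3 b2 b3
        + (y1 * x2 - x1 * y2) * wedge a2 a4 b2 b4
        + (y1 * x2 - x1 * y2) * wedge a1 a3 b1 b3 ).

Definition Bq (k : V4 -> R) (q alpha : V4) : V4 :=
  mk4 (pi_biv k q (mk4 1 0 0 0) alpha) (pi_biv k q (mk4 0 1 0 0) alpha)
      (pi_biv k q (mk4 0 0 1 0) alpha) (pi_biv k q (mk4 0 0 0 1) alpha).

(* T_q Sigma_q = B_q(T_q^* M) *)
Definition tangent_leaf (k : V4 -> R) (q u : V4) : Prop :=
  exists alpha, u = Bq k q alpha.

(* the symplectic form of the leaf at q:
   omega_leaf k q u v w  <->  w = omega_{Sigma_q}(q)(u, v),
   i.e. w = pi_q(alpha, beta) for some alpha, beta with u = B_q alpha,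
   v = B_q beta. *)
Definition omega_leaf (k : V4 -> R) (q u v : V4) (w : R) : Prop :=
  exists alpha beta, u = Bq k q alpha /\ v = Bq k q beta /\
    w = pi_biv k q alpha beta.

(* Area form of the oriented euclidean 2-plane with positively oriented
   orthonormal basis (e1, e2): (u, v) |-> det of coordinates in (e1, e2). *)
Definition area_form (e1 e2 u v : V4) : R :=
  dot u e1 * dot v e2 - dot u e2 * dot v e1.

From Stdlib Require Import Reals Lra.
Open Scope R_scope.

(* At q the bivector is decomposable: pi_q = k(q) f1 /\ f2 with
   f1 = (-x2, -y2, x1, y1) and f2 = (y2, -x2, -y1, x1), two orthogonal vectors
   of squared length |q|^2 spanning the tangent plane of the level set of F.
   For pi = c f /\ g with f, g orthogonal of squared length n one has
   B(alpha) = c (<alpha,g> f - <alpha,f> g), so <B alpha, f> = c n <alpha,g> and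
   <B alpha, g> = -c n <alpha,f>; in the orthonormal frame (f, g)/sqrt n the
   area of (B alpha, B beta) is therefore c n pi(alpha, beta). *)

Lemma mk4_ext (a b c d a' b' c' d' : R) :
  a = a' -> b = b' -> c = c' -> d = d' -> mk4 a b c d = mk4 a' b' c' d'.
Proof. intros -> -> -> ->; reflexivity. Qed.

Lemma dot_comm (u v : V4) : dot u v = dot v u.
Proof. unfold dot; ring. Qed.

Lemma dot_vadd_l (u v w : V4) : dot (vadd u v) w = dot u w + dot v w.
Proof.
  destruct u as [[[? ?] ?] ?], v as [[[? ?] ?] ?]; unfold dot, vadd, mk4; simpl; ring.
Qed.

Lemma dot_vscale_l (a : R) (u v : V4) : dot (vscale a u) v = a * dot u v.
Proof. destruct u as [[[? ?] ?] ?]; unfold dot, vscale, mk4; simpl; ring. Qed.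

Lemma dot_vscale_r (a : R) (u v : V4) : dot u (vscale a v) = a * dot u v.
Proof. rewrite dot_comm, dot_vscale_l, dot_comm; reflexivity. Qed.

Lemma vscale_vscale (a b : R) (u : V4) : vscale a (vscale b u) = vscale (a * b) u.
Proof.
  destruct u as [[[? ?] ?] ?]; unfold vscale, mk4; simpl; apply mk4_ext; ring.
Qed.

Lemma vadd_vscale0_r (u v : V4) : vadd u (vscale 0 v) = u.
Proof.
  destruct u as [[[? ?] ?] ?], v as [[[? ?] ?] ?]; unfold vadd, vscale, mk4; simpl.
  apply mk4_ext; ring.
Qed.

Lemma vadd_vscale0_l (u v : V4) : vadd (vscale 0 u) v = v.
Proof.
  destruct u as [[[? ?] ?] ?], v as [[[? ?] ?] ?]; unfold vadd, vscale, mk4; simpl.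
  apply mk4_ext; ring.
Qed.

Lemma normsq_pos (q : V4) : q <> mk4 0 0 0 0 -> 0 < normsq q.
Proof.
  destruct q as [[[x1 y1] x2] y2]; unfold normsq, dot; simpl; intros Hq0.
  destruct (Rle_or_lt (x1 * x1 + y1 * y1 + x2 * x2 + y2 * y2) 0) as [Hle|]; [|assumption].
  exfalso; apply Hq0.
  assert (x1 = 0) by nra; assert (y1 = 0) by nra;
  assert (x2 = 0) by nra; assert (y2 = 0) by nra; subst; reflexivity.
Qed.

Definition wedge_pair (c : R) (f g alpha beta : V4) : R :=
  c * (dot alpha f * dot beta g - dot alpha g * dot beta f).

Definition wedge_sharp (c : R) (f g alpha : V4) : V4 :=
  vadd (vscale (c * dot alpha g) f) (vscale (- (c * dot alpha f)) g).

Section DecomposableBivector.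

Variables (c n t : R) (f g : V4).
Hypothesis Hc : c <> 0.
Hypothesis Hfg : dot f g = 0.
Hypothesis Hff : dot f f = n.
Hypothesis Hgg : dot g g = n.
Hypothesis Htn : t * t * n = 1.

Let Hn : n <> 0.
Proof. intros ->; lra. Qed.

Lemma dot_wedge_sharp_l (alpha : V4) :
  dot (wedge_sharp c f g alpha) f = c * n * dot alpha g.
Proof.
  unfold wedge_sharp; rewrite dot_vadd_l, !dot_vscale_l, Hff, (dot_comm g f), Hfg; ring.
Qed.

Lemma dot_wedge_sharp_r (alpha : V4) :
  dot (wedge_sharp c f g alpha) g = - (c * n * dot alpha f).
Proof.
  unfold wedge_sharp; rewrite dot_vadd_l, !dot_vscale_l, Hgg, Hfg; ring.
Qed.

Lemma wedge_sharp_frame_l : wedge_sharp c f g (vscale (t / (c * n)) g) = vscale t f.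
Proof.
  unfold wedge_sharp; rewrite !dot_vscale_l, Hgg, (dot_comm g f), Hfg.
  replace (- (c * (t / (c * n) * 0))) with 0 by ring.
  rewrite vadd_vscale0_r; f_equal; field; split; assumption.
Qed.

Lemma wedge_sharp_frame_r : wedge_sharp c f g (vscale (- (t / (c * n))) f) = vscale t g.
Proof.
  unfold wedge_sharp; rewrite !dot_vscale_l, Hff, Hfg.
  replace (c * (- (t / (c * n)) * 0)) with 0 by ring.
  rewrite vadd_vscale0_l; f_equal; field; split; assumption.
Qed.

Lemma wedge_sharp_in_span (alpha : V4) :
  exists a b, wedge_sharp c f g alpha = vadd (vscale a (vscale t f)) (vscale b (vscale t g)).
Proof.
  exists (c * dot alpha g * (t * n)), (- (c * dot alpha f) * (t * n)).
  assert (Hunscale : forall x, x * (t * n) * t = x).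
  { intros x; transitivity (x * (t * t * n)); [ring | rewrite Htn; ring]. }
  unfold wedge_sharp; rewrite !vscale_vscale, !Hunscale; reflexivity.
Qed.

Lemma frame_normsq_l : dot (vscale t f) (vscale t f) = 1.
Proof. rewrite dot_vscale_l, dot_vscale_r, Hff, <- Htn; ring. Qed.

Lemma frame_normsq_r : dot (vscale t g) (vscale t g) = 1.
Proof. rewrite dot_vscale_l, dot_vscale_r, Hgg, <- Htn; ring. Qed.

Lemma frame_orthogonal : dot (vscale t f) (vscale t g) = 0.
Proof. rewrite dot_vscale_l, dot_vscale_r, Hfg; ring. Qed.

Lemma area_form_wedge_sharp (alpha beta : V4) :
  area_form (vscale t f) (vscale t g) (wedge_sharp c f g alpha) (wedge_sharp c f g beta)
  = c * n * wedge_pair c f g alpha beta.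
Proof.
  unfold area_form, wedge_pair.
  rewrite !dot_vscale_r, !dot_wedge_sharp_l, !dot_wedge_sharp_r.
  transitivity (t * t * n * (c * n * (c * (dot alpha f * dot beta g - dot alpha g * dot beta f))));
    [ring | rewrite Htn; ring].
Qed.

End DecomposableBivector.

Definition leaf_frame1 (q : V4) : V4 :=
  let '(x1, y1, x2, y2) := q in mk4 (- x2) (- y2) x1 y1.
Definition leaf_frame2 (q : V4) : V4 :=
  let '(x1, y1, x2, y2) := q in mk4 y2 (- x2) (- y1) x1.

Lemma leaf_frame_orthogonal (q : V4) : dot (leaf_frame1 q) (leaf_frame2 q) = 0.
Proof. destruct q as [[[? ?] ?] ?]; unfold dot, leaf_frame1, leaf_frame2, mk4; simpl; ring. Qed.

Lemma leaf_frame1_normsq (q : V4) : dot (leaf_frame1 q) (leaf_frame1 q) = normsq q.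
Proof. destruct q as [[[? ?] ?] ?]; unfold normsq, dot, leaf_frame1, mk4; simpl; ring. Qed.

Lemma leaf_frame2_normsq (q : V4) : dot (leaf_frame2 q) (leaf_frame2 q) = normsq q.
Proof. destruct q as [[[? ?] ?] ?]; unfold normsq, dot, leaf_frame2, mk4; simpl; ring. Qed.

Lemma pi_biv_decomposable (k : V4 -> R) (q alpha beta : V4) :
  pi_biv k q alpha beta = wedge_pair (k q) (leaf_frame1 q) (leaf_frame2 q) alpha beta.
Proof.
  destruct q as [[[? ?] ?] ?], alpha as [[[? ?] ?] ?], beta as [[[? ?] ?] ?].
  unfold pi_biv, wedge_pair, wedge, dot, leaf_frame1, leaf_frame2, mk4; simpl; ring.
Qed.

Lemma Bq_decomposable (k : V4 -> R) (q alpha : V4) :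
  Bq k q alpha = wedge_sharp (k q) (leaf_frame1 q) (leaf_frame2 q) alpha.
Proof.
  destruct q as [[[? ?] ?] ?], alpha as [[[? ?] ?] ?].
  unfold Bq, pi_biv, wedge_sharp, wedge, dot, vadd, vscale, leaf_frame1, leaf_frame2, mk4;
    simpl; apply mk4_ext; ring.
Qed.

(* Openness of B and B containing 0 play no role at a single point q. *)
Theorem proposition3p1
  (B : V4 -> Prop) (k : V4 -> R)
  (HBopen : open4 B) (HB0 : B (mk4 0 0 0 0))
  (Hk : forall p, B p -> k p <> 0)
  (q : V4) (Hq : B q) (Hq0 : q <> mk4 0 0 0 0) :
  exists e1 e2 : V4,
    tangent_leaf k q e1 /\ tangent_leaf k q e2 /\
    dot e1 e1 = 1 /\ dot e2 e2 = 1 /\ dot e1 e2 = 0 /\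
    (forall u, tangent_leaf k q u ->
       exists a b, u = vadd (vscale a e1) (vscale b e2)) /\
    (forall u v w, tangent_leaf k q u -> tangent_leaf k q v ->
       omega_leaf k q u v w ->
       w = / (k q * normsq q) * area_form e1 e2 u v).
Proof.
  pose proof (Hk q Hq) as Hkq; pose proof (normsq_pos q Hq0) as Hn.
  set (f := leaf_frame1 q); set (g := leaf_frame2 q); set (t := / sqrt (normsq q)).
  assert (Htn : t * t * normsq q = 1).
  { unfold t; rewrite <- Rinv_mult, sqrt_sqrt by lra; field; lra. }
  pose proof (leaf_frame_orthogonal q) as Hfg.
  pose proof (leaf_frame1_normsq q) as Hff; pose proof (leaf_frame2_normsq q) as Hgg.
  exists (vscale t f), (vscale t g); repeat split.
  - exists (vscale (t / (k q * normsq q)) g); rewrite Bq_decomposable.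
    symmetry; apply wedge_sharp_frame_l; assumption.
  - exists (vscale (- (t / (k q * normsq q))) f); rewrite Bq_decomposable.
    symmetry; apply wedge_sharp_frame_r; assumption.
  - apply frame_normsq_l with (n := normsq q); assumption.
  - apply frame_normsq_r with (n := normsq q); assumption.
  - apply frame_orthogonal; assumption.
  - intros u [alpha ->]; rewrite Bq_decomposable; apply wedge_sharp_in_span with (n := normsq q); assumption.
  - intros u v w _ _ [alpha [beta [-> [-> ->]]]].
    rewrite !Bq_decomposable, pi_biv_decomposable, (area_form_wedge_sharp (k q) (normsq q) t) by assumption.
    field; lra.
Qed.
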